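(* Let $\mathcal{H}$ be a separable Hilbert space with a fixed orthonormal basis $\mathcal{B}=\{e_k\}_{k\in\mathbb{N}}$ and let $\mathcal{S}$ be a closed subspace of $\mathcal{H}$. The following are equivalent: (1) $\sup_{Q\in\mathcal{P}(\mathcal{D})}c[\mathcal{S},R(Q)]<1$ (i.e. $\mathcal{S}$ is $\mathcal{B}$-compatible); (2) $\sup_{Q\in\mathcal{P}_0(\mathcal{D})}c[\mathcal{S},R(Q)]<1$; (3) $\sup_{Q\in\mathcal{P}_{0,\mathcal{S}}(\mathcal{D})}c[\mathcal{S},R(Q)]<1$.
   Context: $\mathcal{D}$ is the algebra of bounded operators diagonal with respect to $\mathcal{B}$; $\mathcal{P}(\mathcal{D})$ is the set of orthogonal projections in $\mathcal{D}$; $\mathcal{P}_0(\mathcal{D})$ is the set of finite-rank elements of $\mathcal{P}(\mathcal{D})$; $\mathcal{P}_{0,\mathcal{S}}(\mathcal{D})=\{Q\in\mathcal{P}_0(\mathcal{D}):R(Q)\cap\mathcal{S}=\{0\}\}$. For closed subspaces $\mathcal{M},\mathcal{N}$, $c[\mathcal{M},\mathcal{N}]=\sup\{|\langle\xi,\eta\rangle|:\xi\in\mathcal{M}\ominus(\mathcal{M}\cap\mathcal{N}),\ \eta\in\mathcal{N}\ominus(\mathcal{M}\cap\mathcal{N}),\ \|\xi\|=\|\eta\|=1\}$ (cosine of the Friedrichs angle). *)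

From HB Require Import structures.
From mathcomp Require Import all_boot all_order all_algebra.
From mathcomp Require Import boolp classical_sets reals.
From mathcomp Require Import complex.
Set Implicit Arguments. Unset Strict Implicit. Unset Printing Implicit Defensive.
Import Order.TTheory GRing.Theory Num.Theory.
Local Open Scope ring_scope.
Local Open Scope classical_set_scope.

Section Hilbert.
Variables (R : realType) (V : lmodType R[i]) (inner : V -> V -> R[i]).

Definition is_inner_product : Prop :=
  [/\ (forall (a : R[i]) (x y z : V), inner (a *: x + y) z = a * inner x z + inner y z),
      (forall x y : V, inner y x = Num.conj (inner x y)),
      (forall x : V, 0 <= inner x x) &
      (forall x : V, inner x x = 0 -> x = 0)].

Definition hnorm (x : V) : R := Num.sqrt (complex.Re (inner x x)).

Definition cabs (z : R[i]) : R := Normc.normc z.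

Definition converges_to (u : nat -> V) (x : V) : Prop :=
  forall eps : R, 0 < eps -> exists N : nat, forall n, (N <= n)%N -> hnorm (u n - x) < eps.

Definition cauchy_seq (u : nat -> V) : Prop :=
  forall eps : R, 0 < eps -> exists N : nat, forall n m, (N <= n)%N -> (N <= m)%N ->
    hnorm (u n - u m) < eps.

Definition is_complete : Prop :=
  forall u : nat -> V, cauchy_seq u -> exists x, converges_to u x.

Definition is_orthonormal_basis (e : nat -> V) : Prop :=
  (forall j k : nat, inner (e j) (e k) = (j == k)%:R) /\
  (forall x : V, (forall k, inner x (e k) = 0) -> x = 0).

Definition subspace (M : set V) : Prop :=
  M 0 /\ forall (a : R[i]) (x y : V), M x -> M y -> M (a *: x + y).

Definition closed_subspace (M : set V) : Prop :=
  subspace M /\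
  forall (u : nat -> V) (x : V), (forall n, M (u n)) -> converges_to u x -> M x.

Definition orthogonal_to (x : V) (M : set V) : Prop :=
  forall y, M y -> inner x y = 0.

Definition ominus_cap (M N : set V) : set V :=
  [set x | M x /\ orthogonal_to x (M `&` N)].

(** cosine of the Friedrichs angle c[M,N]  (sup of the empty set is 0) *)
Definition friedrichs_cos (M N : set V) : R :=
  sup [set r : R | exists xi eta : V,
         [/\ ominus_cap M N xi, hnorm xi = 1, ominus_cap N M eta, hnorm eta = 1
            & r = cabs (inner xi eta)]].

Definition bounded_linear (T : V -> V) : Prop :=
  (forall (a : R[i]) (x y : V), T (a *: x + y) = a *: T x + T y) /\
  exists C : R, forall x, hnorm (T x) <= C * hnorm x.

Definition diagonal (e : nat -> V) (T : V -> V) : Prop :=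
  bounded_linear T /\ forall k, exists lam : R[i], T (e k) = lam *: e k.

Definition orth_projection (T : V -> V) : Prop :=
  (forall x, T (T x) = T x) /\ (forall x y, inner (T x) y = inner x (T y)).

Definition finite_rank (T : V -> V) : Prop :=
  exists (n : nat) (f : 'I_n -> V), forall y, range T y ->
    exists c : 'I_n -> R[i], y = \sum_(i < n) c i *: f i.

Definition PD (e : nat -> V) : set (V -> V) :=
  [set T | diagonal e T /\ orth_projection T].
Definition P0D (e : nat -> V) : set (V -> V) :=
  [set T | PD e T /\ finite_rank T].
Definition P0SD (e : nat -> V) (S : set V) : set (V -> V) :=
  [set T | P0D e T /\ (forall y, range T y -> S y -> y = 0)].

Definition sup_cos (S : set V) (P : set (V -> V)) : R :=
  sup [set friedrichs_cos S (range T) | T in P].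

End Hilbert.

From HB Require Import structures.
From mathcomp Require Import all_boot all_order all_algebra.
From mathcomp Require Import boolp classical_sets reals.
From mathcomp Require Import complex.
From mathcomp Require Import ring lra.
Import Order.TTheory GRing.Theory Num.Theory.
Local Open Scope classical_set_scope.
Local Open Scope complex_scope.
Local Open Scope ring_scope.

(* Since P_{0,S}(D) ⊆ P_0(D) ⊆ P(D), it suffices to show c[S, R(Q)] <= c0
   for every Q in P(D), where c0 is the supremum over P_{0,S}(D); then all
   three suprema coincide.  For a finite diagonal projection Q with
   R(Q) ∩ S = 0, c[S, R(Q)] <= c0 gives ‖Qz‖ <= c0 ‖z‖ on S, that is
   (1 - c0²) ‖z‖² <= ‖z - Qz‖².  Splitting off vectors of S ∩ R(Q) one basis
   vector at a time extends this to every finite diagonal Q: each z in S has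
   some x in S ∩ R(Q) with (1 - c0²) ‖z - x‖² <= ‖z - Qz‖².  Given Q in P(D)
   and a unit vector ξ in S ⊖ (S ∩ R(Q)), apply this to the finite truncations
   Q_n of Q: as ξ ⊥ x, ‖Q_n ξ‖ <= c0, so ‖Qξ‖ <= c0 by Parseval, and
   |<ξ, η>| = |<Qξ, η>| <= c0 for every unit vector η in R(Q). *)

Lemma ge_sup_nonneg (R : realType) (A : set R) (c : R) :
  (forall r, A r -> r <= c) -> 0 <= c -> sup A <= c.
Proof.
move=> Ac c0; have [[r Ar]|A0] := pselect (A !=set0).
  by apply: ge_sup => //; exists r.
by rewrite (_ : A = set0) ?sup0 // -subset0 => r Ar; apply: A0; exists r.
Qed.

Lemma sup_ge0 (R : realType) (A : set R) :
  has_ubound A -> (forall r, A r -> 0 <= r) -> 0 <= sup A.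
Proof.
move=> ubA A_ge0; have [[r Ar]|A0] := pselect (A !=set0).
  exact: le_trans (A_ge0 r Ar) (ub_le_sup ubA Ar).
by rewrite (_ : A = set0) ?sup0 // -subset0 => r Ar; apply: A0; exists r.
Qed.

Lemma sum_ord_delta (M : nmodType) n (P : pred nat) (F : nat -> M) (j : nat) :
  \sum_(i < n | P i) (if (i : nat) == j then F i else 0) =
  if (j < n)%N && P j then F j else 0.
Proof.
rewrite big_mkcond; elim: n => [|n IH]; first by rewrite big_ord0.
rewrite big_ord_recr /= IH; case: (ltngtP j n) => [jn|nj|<-].
- by rewrite ltnS (ltnW jn) if_same addr0.
- by rewrite ltnS leqNgt nj /= if_same addr0.
- by rewrite ltnS leqnn /= add0r; case: (P j).
Qed.

Section ComplexAbs.
Variable R : realType.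

Lemma conjC_realC (r : R) : Num.conj r%:C = r%:C.
Proof. exact: conjc_real. Qed.

Lemma cabsE (z : R[i]) : `|z| = (cabs z)%:C.
Proof. by []. Qed.

Lemma cabs_ge0 (z : R[i]) : 0 <= cabs z.
Proof. by rewrite -lecR -cabsE normr_ge0. Qed.

Lemma cabs_real (r : R) : 0 <= r -> cabs r%:C = r.
Proof. by move=> r0; apply: complexI; rewrite -cabsE ger0_norm // ler0c. Qed.

Lemma cabs_realM (r : R) (z : R[i]) : 0 <= r -> cabs (r%:C * z) = r * cabs z.
Proof.
move=> r0; apply: complexI; rewrite rmorphM /= -!cabsE normrM.
by rewrite (@ger0_norm _ r%:C) // ler0c.
Qed.

End ComplexAbs.

Section Subspace.
Context {R : realType} {V : lmodType R[i]} {M : set V}.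
Hypothesis M_sub : subspace M.

Lemma subspace0 : M 0.
Proof. by case: M_sub. Qed.

Lemma subspaceD {x y : V} : M x -> M y -> M (x + y).
Proof. by case: M_sub => _ MD Mx My; rewrite -[x]scale1r; apply: MD. Qed.

Lemma subspaceZ a {x : V} : M x -> M (a *: x).
Proof.
by case: M_sub => _ MD Mx; rewrite -[a *: x]addr0; apply: MD => //; exact: subspace0.
Qed.

Lemma subspaceB {x y : V} : M x -> M y -> M (x - y).
Proof. by move=> Mx My; apply: subspaceD => //; rewrite -scaleN1r; apply: subspaceZ. Qed.

End Subspace.

Lemma range_subspace {R : realType} {V : lmodType R[i]} {f : V -> V} :
  linear f -> subspace (range f).
Proof.
move=> f_lin; split.
  by exists 0 => //; have := zmod_morphism_linear f_lin 0 0; rewrite !subrr.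
by move=> a _ _ [x _ <-] [y _ <-]; exists (a *: x + y); rewrite // f_lin.
Qed.

Section Hilbert.
Variables (R : realType) (V : lmodType R[i]) (inner : V -> V -> R[i]).
Hypothesis inner_prod : is_inner_product inner.

Lemma innerDZl a x y z : inner (a *: x + y) z = a * inner x z + inner y z.
Proof. by case: inner_prod. Qed.

Lemma inner_conj x y : inner y x = Num.conj (inner x y).
Proof. by case: inner_prod. Qed.

Lemma inner0l z : inner 0 z = 0.
Proof.
have := innerDZl 1 0 0 z; rewrite scaler0 addr0 mul1r => h.
by apply: (addrI (inner 0 z)); rewrite addr0 -h.
Qed.

Lemma innerDl x y z : inner (x + y) z = inner x z + inner y z.
Proof. by have := innerDZl 1 x y z; rewrite scale1r mul1r. Qed.

Lemma innerZl a x z : inner (a *: x) z = a * inner x z.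
Proof. by have := innerDZl a x 0 z; rewrite addr0 inner0l addr0. Qed.

Lemma innerNl x z : inner (- x) z = - inner x z.
Proof. by rewrite -scaleN1r innerZl mulN1r. Qed.

Lemma innerBl x y z : inner (x - y) z = inner x z - inner y z.
Proof. by rewrite innerDl innerNl. Qed.

Lemma inner0r z : inner z 0 = 0.
Proof. by rewrite inner_conj inner0l conjC0. Qed.

Lemma innerDr x y z : inner z (x + y) = inner z x + inner z y.
Proof. by rewrite inner_conj innerDl rmorphD /= -!inner_conj. Qed.

Lemma innerZr a x z : inner z (a *: x) = Num.conj a * inner z x.
Proof. by rewrite inner_conj innerZl rmorphM /= -inner_conj. Qed.

Lemma innerNr x z : inner z (- x) = - inner z x.
Proof. by rewrite inner_conj innerNl rmorphN /= -inner_conj. Qed.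

Lemma innerBr x y z : inner z (x - y) = inner z x - inner z y.
Proof. by rewrite innerDr innerNr. Qed.

Lemma inner_suml n (P : pred 'I_n) (F : 'I_n -> V) z :
  inner (\sum_(i < n | P i) F i) z = \sum_(i < n | P i) inner (F i) z.
Proof. by apply: (big_morph (inner^~ z)) => [x y|]; [exact: innerDl | exact: inner0l]. Qed.

Lemma inner_sumr n (P : pred 'I_n) (F : 'I_n -> V) z :
  inner z (\sum_(i < n | P i) F i) = \sum_(i < n | P i) inner z (F i).
Proof. by apply: (big_morph (inner z)) => [x y|]; [exact: innerDr | exact: inner0r]. Qed.

Definition sqnorm (x : V) : R := complex.Re (inner x x).

Lemma inner_self x : inner x x = (sqnorm x)%:C.
Proof.
case: inner_prod => _ _ /(_ x) + _; rewrite /sqnorm lecE.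
by case: (inner x x) => a b /= /andP[/eqP -> _].
Qed.

Lemma sqnorm_ge0 x : 0 <= sqnorm x.
Proof. by case: inner_prod => _ _ /(_ x); rewrite inner_self lecR. Qed.

Lemma sqnorm_eq0 x : sqnorm x = 0 -> x = 0.
Proof. by case: inner_prod => _ _ _ x0 sx0; apply: x0; rewrite inner_self sx0. Qed.

Lemma sqnorm0 : sqnorm 0 = 0.
Proof. by rewrite /sqnorm inner0l. Qed.

Lemma sqnormN x : sqnorm (- x) = sqnorm x.
Proof. by rewrite /sqnorm innerNl innerNr opprK. Qed.

Lemma sqnormB x y : sqnorm (x - y) = sqnorm (y - x).
Proof. by rewrite -sqnormN opprB. Qed.

Lemma sqnormD_orth x y : inner x y = 0 -> sqnorm (x + y) = sqnorm x + sqnorm y.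
Proof.
move=> xy0; apply: complexI; rewrite rmorphD /= -!inner_self.
by rewrite innerDl !innerDr xy0 (inner_conj x y) xy0 conjC0 addr0 add0r.
Qed.

Lemma sqnormZ_real (r : R) x : sqnorm (r%:C *: x) = r ^+ 2 * sqnorm x.
Proof.
apply: complexI; rewrite rmorphM rmorphXn /= -!inner_self innerZl innerZr.
by rewrite conjC_realC expr2 mulrA.
Qed.

Lemma cauchy_schwarz_sqr x y : cabs (inner x y) ^+ 2 <= sqnorm x * sqnorm y.
Proof.
have [y0|ny0] := eqVneq (sqnorm y) 0.
  by rewrite (sqnorm_eq0 _ y0) inner0r /cabs Normc.normc0 expr0n /= sqnorm0 mulr0.
have y_gt0 : 0 < sqnorm y by rewrite lt_def ny0 sqnorm_ge0.
have yC0 : (sqnorm y)%:C != 0 by rewrite eq_complex /= negb_and ny0.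
set a := inner x y; set t := a / (sqnorm y)%:C.
(* expand 0 <= ‖x - t y‖² at the minimising t = <x, y> / ‖y‖² *)
have E : inner (x - t *: y) (x - t *: y) =
    (sqnorm x)%:C - (a * Num.conj a) / (sqnorm y)%:C.
  rewrite !(innerBl, innerBr, innerZl, innerZr) -/a (inner_conj x y) -/a.
  rewrite !inner_self.
  by rewrite /t rmorphM /= fmorphV /= conjC_realC; field.
have := sqnorm_ge0 (x - t *: y); rewrite /sqnorm E -/(sqnorm x) -normCK.
rewrite -rmorphXn -rmorphV ?unitfE // -rmorphM -rmorphB /= subr_ge0.
by rewrite ler_pdivrMr.
Qed.

Lemma hnormE x : hnorm inner x = Num.sqrt (sqnorm x).
Proof. by []. Qed.

Lemma hnorm_ge0 x : 0 <= hnorm inner x.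
Proof. exact: sqrtr_ge0. Qed.

Lemma hnorm_sqr x : hnorm inner x ^+ 2 = sqnorm x.
Proof. by rewrite hnormE sqr_sqrtr // sqnorm_ge0. Qed.

Lemma hnormB x y : hnorm inner (x - y) = hnorm inner (y - x).
Proof. by rewrite !hnormE sqnormB. Qed.

Lemma hnorm_ltE {x : V} {eps : R} :
  0 <= eps -> (hnorm inner x < eps) = (sqnorm x < eps ^+ 2).
Proof. by move=> eps0; rewrite -hnorm_sqr ltr_pXn2r // nnegrE hnorm_ge0. Qed.

Lemma cauchy_schwarz x y : cabs (inner x y) <= hnorm inner x * hnorm inner y.
Proof.
rewrite -(@ler_pXn2r _ 2) // ?nnegrE ?mulr_ge0 ?hnorm_ge0 ?cabs_ge0 //.
by rewrite exprMn !hnorm_sqr cauchy_schwarz_sqr.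
Qed.

Lemma hnorm_normalize {x : V} :
  0 < sqnorm x -> hnorm inner ((hnorm inner x)^-1%:C *: x) = 1.
Proof.
move=> x_gt0; rewrite hnormE sqnormZ_real exprVn hnorm_sqr mulVf ?sqrtr1 //.
by rewrite gt_eqF.
Qed.

Lemma ominus_capZ (a : R[i]) {M N : set V} {x : V} :
  subspace M -> ominus_cap inner M N x -> ominus_cap inner M N (a *: x).
Proof.
move=> M_sub [Mx x_perp]; split=> [|y /x_perp]; first exact: subspaceZ.
by rewrite innerZl => ->; rewrite mulr0.
Qed.

Definition cos_set (M N : set V) : set R := [set r : R | exists xi eta : V,
  [/\ ominus_cap inner M N xi, hnorm inner xi = 1, ominus_cap inner N M eta,
      hnorm inner eta = 1 & r = cabs (inner xi eta)]].

Lemma cos_set_le1 M N r : cos_set M N r -> r <= 1.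
Proof.
by case=> xi [eta [_ xi1 _ eta1 ->]]; have := cauchy_schwarz xi eta; rewrite xi1 eta1 mulr1.
Qed.

Lemma cos_set_ub M N : has_ubound (cos_set M N).
Proof. by exists 1 => r /cos_set_le1. Qed.

Lemma friedrichs_cos_le1 M N : friedrichs_cos inner M N <= 1.
Proof. by apply: ge_sup_nonneg => // r /cos_set_le1. Qed.

Lemma friedrichs_cos_ge0 M N : 0 <= friedrichs_cos inner M N.
Proof.
by apply: sup_ge0 (cos_set_ub M N) _ => r [xi [eta [_ _ _ _ ->]]]; exact: cabs_ge0.
Qed.

Lemma le_friedrichs_cos {M N : set V} {xi eta : V} :
  ominus_cap inner M N xi -> hnorm inner xi = 1 ->
  ominus_cap inner N M eta -> hnorm inner eta = 1 ->
  cabs (inner xi eta) <= friedrichs_cos inner M N.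
Proof. by move=> *; apply: (ub_le_sup (cos_set_ub M N)); exists xi, eta. Qed.

Lemma cabs_inner_le_cos {M N : set V} {xi eta : V} : subspace M -> subspace N ->
  ominus_cap inner M N xi -> ominus_cap inner N M eta ->
  cabs (inner xi eta) <= friedrichs_cos inner M N * hnorm inner xi * hnorm inner eta.
Proof.
move=> M_sub N_sub xiMN etaNM.
have c_ge0 := friedrichs_cos_ge0 M N.
have [xi0|xi_neq0] := eqVneq (sqnorm xi) 0.
  by rewrite (sqnorm_eq0 _ xi0) inner0l cabs_real // !mulr_ge0 ?hnorm_ge0.
have [eta0|eta_neq0] := eqVneq (sqnorm eta) 0.
  by rewrite (sqnorm_eq0 _ eta0) inner0r cabs_real // !mulr_ge0 ?hnorm_ge0.
have xi_gt0 : 0 < sqnorm xi by rewrite lt_def xi_neq0 sqnorm_ge0.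
have eta_gt0 : 0 < sqnorm eta by rewrite lt_def eta_neq0 sqnorm_ge0.
set a := hnorm inner xi; set b := hnorm inner eta.
have a_gt0 : 0 < a by rewrite /a hnormE sqrtr_gt0.
have b_gt0 : 0 < b by rewrite /b hnormE sqrtr_gt0.
have := le_friedrichs_cos (ominus_capZ a^-1%:C M_sub xiMN) (hnorm_normalize xi_gt0)
  (ominus_capZ b^-1%:C N_sub etaNM) (hnorm_normalize eta_gt0).
rewrite innerZl innerZr conjC_realC mulrA -rmorphM /= cabs_realM; last first.
  by rewrite mulr_ge0 // invr_ge0 ltW.
by rewrite -invfM mulrC ler_pdivrMr ?mulr_gt0 // mulrA.
Qed.

Lemma proj_le_cos {S : set V} {Q : V -> V} {z : V} :
  subspace S -> linear Q -> orth_projection inner Q ->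
  (forall y, range Q y -> S y -> y = 0) -> S z ->
  hnorm inner (Q z) <= friedrichs_cos inner S (range Q) * hnorm inner z.
Proof.
move=> S_sub Q_lin [QK Q_sa] capQS0 Sz.
have zS : ominus_cap inner S (range Q) z.
  by split=> // y [Sy Ry]; rewrite (capQS0 y Ry Sy) inner0r.
have QzQ : ominus_cap inner (range Q) S (Q z).
  by split=> [|y [Ry Sy]]; [exists z | rewrite (capQS0 y Ry Sy) inner0r].
have := cabs_inner_le_cos S_sub (range_subspace Q_lin) zS QzQ.
rewrite -QK -Q_sa QK inner_self cabs_real ?sqnorm_ge0 // -hnorm_sqr expr2.
have [->|Qz_neq0] := eqVneq (hnorm inner (Q z)) 0.
  by rewrite mulr_ge0 ?friedrichs_cos_ge0 ?hnorm_ge0.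
by rewrite ler_pM2r // lt_def Qz_neq0 hnorm_ge0.
Qed.

Lemma sup_cos_ub S (P : set (V -> V)) :
  has_ubound [set friedrichs_cos inner S (range T) | T in P].
Proof. by exists 1 => r [T _ <-]; exact: friedrichs_cos_le1. Qed.

Lemma friedrichs_cos_le_sup_cos S (P : set (V -> V)) T : P T ->
  friedrichs_cos inner S (range T) <= sup_cos inner S P.
Proof. by move=> PT; apply: (ub_le_sup (sup_cos_ub S P)); exists T. Qed.

Lemma sup_cos_ge0 S (P : set (V -> V)) : 0 <= sup_cos inner S P.
Proof.
by apply: sup_ge0 (sup_cos_ub S P) _ => r [T _ <-]; exact: friedrichs_cos_ge0.
Qed.

Lemma sup_cos_le1 S (P : set (V -> V)) : sup_cos inner S P <= 1.
Proof. by apply: ge_sup_nonneg => // r [T _ <-]; exact: friedrichs_cos_le1. Qed.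

Lemma le_sup_cos S (P1 P2 : set (V -> V)) : P1 `<=` P2 -> P1 !=set0 ->
  sup_cos inner S P1 <= sup_cos inner S P2.
Proof.
move=> P12 [T P1T]; apply: sup_le.
- by move=> r [U P1U <-]; apply: le_down; exists U => //; apply: P12.
- by exists (friedrichs_cos inner S (range T)), T.
- split; last exact: sup_cos_ub.
  by exists (friedrichs_cos inner S (range T)), T => //; apply: P12.
Qed.

Section OrthonormalBasis.
Variable e : nat -> V.
Hypothesis e_basis : is_orthonormal_basis inner e.

Lemma inner_basis j k : inner (e j) (e k) = (j == k)%:R.
Proof. by case: e_basis. Qed.

Lemma basis_total x : (forall k, inner x (e k) = 0) -> x = 0.
Proof. by case: e_basis => _; apply. Qed.

Lemma hnorm_basis k : hnorm inner (e k) = 1.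
Proof. by rewrite hnormE /sqnorm inner_basis eqxx sqrtr1. Qed.

Definition dproj n (P : pred nat) (x : V) : V :=
  \sum_(i < n | P i) inner x (e i) *: e i.

Fact dproj_is_linear n P : linear (dproj n P).
Proof.
move=> a x y; rewrite /dproj scaler_sumr -big_split /=; apply: eq_bigr => i _.
by rewrite innerDZl scalerDl scalerA.
Qed.

HB.instance Definition _ n P :=
  GRing.isLinear.Build R[i] V V *:%R (dproj n P) (dproj_is_linear n P).

Lemma inner_dproj_basis n P x j :
  inner (dproj n P x) (e j) = if (j < n)%N && P j then inner x (e j) else 0.
Proof.
rewrite /dproj inner_suml -(sum_ord_delta _ n P (fun i => inner x (e i))).
apply: eq_bigr => i _; rewrite innerZl inner_basis.
by case: eqP => [->|_]; rewrite ?mulr1 ?mulr0.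
Qed.

Lemma eq_dproj n P P' x :
  (forall i, (i < n)%N -> P i = P' i) -> dproj n P x = dproj n P' x.
Proof. by move=> PP'; apply: eq_bigl => i; apply: PP'. Qed.

Lemma dproj_comp m n P P' x :
  dproj m P (dproj n P' x) = dproj m (fun i => P i && ((i < n)%N && P' i)) x.
Proof.
rewrite /dproj big_mkcondr /=; apply: eq_bigr => i _.
by rewrite -/(dproj n P' x) inner_dproj_basis; case: ifP; rewrite ?scale0r.
Qed.

Lemma dprojK n P x : dproj n P (dproj n P x) = dproj n P x.
Proof. by rewrite dproj_comp; apply: eq_dproj => i lt_in; rewrite lt_in andbb. Qed.

Lemma dproj_selfadjoint n P x y : inner (dproj n P x) y = inner x (dproj n P y).
Proof.
rewrite /dproj inner_suml inner_sumr; apply: eq_bigr => i _.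
by rewrite innerZl innerZr (inner_conj y (e i)) mulrC.
Qed.

Lemma dproj_orth_proj n P : orth_projection inner (dproj n P).
Proof. by split; [exact: dprojK | exact: dproj_selfadjoint]. Qed.

Lemma sqnorm_dproj_split n P x :
  sqnorm x = sqnorm (dproj n P x) + sqnorm (x - dproj n P x).
Proof.
rewrite -sqnormD_orth; first by rewrite addrC subrK.
by rewrite innerBr !dproj_selfadjoint dprojK subrr.
Qed.

Lemma sqnorm_dproj_le n P x : sqnorm (dproj n P x) <= sqnorm x.
Proof. by rewrite (sqnorm_dproj_split n P x) lerDl sqnorm_ge0. Qed.

Lemma dproj_basis n P k :
  dproj n P (e k) = (if (k < n)%N && P k then 1 else 0) *: e k.
Proof.
transitivity (\sum_(i < n | P i) (if (i : nat) == k then e i else 0)).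
  apply: eq_bigr => i _; rewrite inner_basis eq_sym.
  by case: eqP; rewrite ?scale1r ?scale0r.
by rewrite sum_ord_delta; case: ifP; rewrite ?scale1r ?scale0r.
Qed.

Lemma dproj_P0D n P : P0D inner e (dproj n P).
Proof.
split; last first.
  exists n, (fun i : 'I_n => e i) => _ [x _ <-].
  exists (fun i : 'I_n => if P i then inner x (e i) else 0).
  by rewrite /dproj big_mkcond /=; apply: eq_bigr => i _; case: ifP; rewrite ?scale0r.
split; last exact: dproj_orth_proj.
split; last by move=> k; eexists; exact: dproj_basis.
split; first exact: dproj_is_linear.
by exists 1 => x; rewrite mul1r !hnormE ler_wsqrtr // sqnorm_dproj_le.
Qed.

Lemma dproj_fixed_coord {n P y} : dproj n P y = y -> y != 0 ->
  exists2 i : 'I_n, P i & inner y (e i) != 0.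
Proof.
move=> Py_y y_neq0; apply: contrapT => no_coord; move/eqP: y_neq0; apply.
rewrite -Py_y /dproj big1 // => i Pi.
have [-> | yi_neq0] := eqVneq (inner y (e i)) 0; first by rewrite scale0r.
by case: no_coord; exists i.
Qed.

Lemma dproj_split {n} {P : pred nat} {i : 'I_n} x : P i ->
  dproj n P x = inner x (e i) *: e i + dproj n (fun j => P j && (j != i :> nat)) x.
Proof. by move=> Pi; rewrite /dproj (bigD1 i). Qed.

Definition proj_support (Q : V -> V) : pred nat := fun k => Q (e k) == e k.

Section DiagonalProjection.
Variable Q : V -> V.
Hypothesis PD_Q : PD inner e Q.

Lemma PD_basis k : Q (e k) = e k \/ Q (e k) = 0.
Proof.
case: PD_Q => [[[Q_lin _] Q_diag] [QK _]]; have [lam Qek] := Q_diag k.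
have QZ : Q (lam *: e k) = lam *: Q (e k) := scalable_linear Q_lin lam (e k).
have lam2 := QK (e k); rewrite {1}Qek QZ Qek in lam2.
move: lam2 => /(congr1 (inner^~ (e k))).
rewrite !innerZl inner_basis eqxx mulr1 => /eqP.
rewrite -subr_eq0 -{3}[lam]mulr1 -mulrBr mulf_eq0 subr_eq0 => /orP[] /eqP lam_01.
- by right; rewrite Qek lam_01 scale0r.
- by left; rewrite Qek lam_01 scale1r.
Qed.

Lemma inner_PD_basis x k :
  inner (Q x) (e k) = if proj_support Q k then inner x (e k) else 0.
Proof.
case: PD_Q => [_ [_ Q_sa]]; rewrite Q_sa /proj_support.
case: (PD_basis k) => ->; first by rewrite eqxx.
by rewrite inner0r; case: eqP => // <-; rewrite inner0r.
Qed.

Lemma PD_fixed z : (forall k, ~~ proj_support Q k -> inner z (e k) = 0) -> Q z = z.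
Proof.
move=> z_supp; apply/eqP; rewrite -subr_eq0; apply/eqP/basis_total => k.
rewrite innerBl inner_PD_basis; case: ifP => [_|/negbT/z_supp ->]; first exact: subrr.
by rewrite subrr.
Qed.

End DiagonalProjection.

Lemma inner_basis_limit k N c {u : nat -> V} {x : V} : converges_to inner u x ->
  (forall n, (N <= n)%N -> inner (u n) (e k) = c) -> inner x (e k) = c.
Proof.
move=> ux uc; apply/eqP; rewrite -subr_eq0; apply/eqP/Normc.eq0_normc/eqP.
rewrite eq_le cabs_ge0 andbT; apply/ler_addgt0Pr => eps eps_gt0; rewrite add0r.
have [M uMx] := ux eps eps_gt0; set n := maxn N M.
rewrite -(uc n (leq_maxl _ _)) -innerBl.
apply: le_trans (cauchy_schwarz _ _) _; rewrite hnorm_basis mulr1 hnormB.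
exact/ltW/uMx/leq_maxr.
Qed.

Lemma dproj_cauchy y : cauchy_seq inner (fun n => dproj n xpredT y).
Proof.
pose a n := sqnorm (dproj n xpredT y).
have sqnorm_dproj_diff m n : (m <= n)%N ->
    sqnorm (dproj n xpredT y - dproj m xpredT y) = a n - a m.
  move=> le_mn; rewrite /a (sqnorm_dproj_split m xpredT (dproj n xpredT y)).
  rewrite dproj_comp (@eq_dproj m _ xpredT) => [|i lt_im].
    by rewrite addrAC subrr add0r.
  by rewrite (leq_trans lt_im le_mn).
have a_ub : has_sup [set a n | n in [set: nat]].
  split; first by exists (a 0%N), 0%N.
  by exists (sqnorm y) => _ [n _ <-]; exact: sqnorm_dproj_le.
move=> eps eps_gt0.
have [_ [N _ <-] aN_gt] := sup_adherent (exprn_gt0 2 eps_gt0) a_ub.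
have close m n : (N <= m)%N -> (m <= n)%N ->
    hnorm inner (dproj n xpredT y - dproj m xpredT y) < eps.
  move=> le_Nm le_mn; rewrite (hnorm_ltE (ltW eps_gt0)) sqnorm_dproj_diff //.
  have a_le_sup : a n <= sup [set a n | n in [set: nat]].
    by apply: ub_le_sup; [case: a_ub | exists n].
  have := sqnorm_dproj_diff _ _ le_Nm.
  by have := sqnorm_ge0 (dproj m xpredT y - dproj N xpredT y); lra.
exists N => n m le_Nn le_Nm; case: (leqP m n) => [le_mn|/ltnW le_nm]; first exact: close.
by rewrite hnormB; apply: close.
Qed.

Hypothesis complete : is_complete inner.

Lemma dproj_cvg y : converges_to inner (fun n => dproj n xpredT y) y.
Proof.
have [z yz] := complete _ (dproj_cauchy y).
suff zy : z = y by rewrite zy in yz.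
apply/eqP; rewrite -subr_eq0; apply/eqP/basis_total => k.
rewrite innerBl (inner_basis_limit k k.+1 (inner y (e k)) yz) ?subrr // => n lt_kn.
by rewrite inner_dproj_basis lt_kn.
Qed.

Lemma sqnorm_le_dproj y B :
  (forall n, sqnorm (dproj n xpredT y) <= B) -> sqnorm y <= B.
Proof.
move=> dproj_le; apply/ler_addgt0Pr => eps eps_gt0.
have [N yN] : exists N, forall n, (N <= n)%N ->
    hnorm inner (dproj n xpredT y - y) < Num.sqrt eps.
  by apply: dproj_cvg; rewrite sqrtr_gt0.
move: (yN N (leqnn N)); rewrite hnorm_ltE ?sqrtr_ge0 // (sqr_sqrtr (ltW eps_gt0)).
rewrite sqnormB => rem_lt.
rewrite (sqnorm_dproj_split N xpredT y); have := dproj_le N; lra.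
Qed.

Section SubspaceAngles.
Variable S : set V.
Hypothesis S_sub : subspace S.

Local Notation c0 := (sup_cos inner S (P0SD inner e S)).

Lemma dproj0_P0SD : P0SD inner e S (dproj 0 xpred0).
Proof. by split=> [|_ [x _ <-] _]; [exact: dproj_P0D | rewrite /dproj big_ord0]. Qed.

Lemma one_sub_c0_sqr_ge0 : 0 <= 1 - c0 ^+ 2.
Proof. by rewrite subr_ge0 exprn_ile1 ?sup_cos_ge0 ?sup_cos_le1. Qed.

Lemma dproj_cap0_approx n P z :
  (forall y, range (dproj n P) y -> S y -> y = 0) -> S z ->
  (1 - c0 ^+ 2) * sqnorm z <= sqnorm (z - dproj n P z).
Proof.
move=> cap0 Sz.
have cos_le : friedrichs_cos inner S (range (dproj n P)) <= c0.
  by apply: friedrichs_cos_le_sup_cos; split; [exact: dproj_P0D | exact: cap0].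
have := proj_le_cos S_sub (dproj_is_linear n P) (dproj_orth_proj n P) cap0 Sz.
move=> /le_trans /(_ (ler_wpM2r (hnorm_ge0 z) cos_le)).
rewrite -(@ler_pXn2r _ 2) ?nnegrE ?mulr_ge0 ?hnorm_ge0 ?sup_cos_ge0 //.
by rewrite exprMn !hnorm_sqr; have := sqnorm_dproj_split n P z; lra.
Qed.

Lemma dproj_cap_approx n P z : S z -> exists x, [/\ S x, dproj n P x = x &
  (1 - c0 ^+ 2) * sqnorm (z - x) <= sqnorm (z - dproj n P z)].
Proof.
have [m] := ubnP #|[pred i : 'I_n | P i]|; elim: m P z => // m IH P z lt_card Sz.
have [[y [fix_y Sy y_neq0]]|cap0] :=
  pselect (exists y, [/\ dproj n P y = y, S y & y != 0]); last first.
  exists 0; split; [exact: subspace0 | exact: linear0 | rewrite subr0].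
  apply: dproj_cap0_approx => // _ [w _ <-] Sy; apply/eqP; apply: contrapT => y_neq0.
  by apply: cap0; exists (dproj n P w); split=> //; [exact: dprojK | exact/negP].
have [i Pi yi_neq0] := dproj_fixed_coord fix_y y_neq0.
pose P' j := P j && (j != i :> nat).
have lt_card' : (#|[pred j : 'I_n | P' j]| < m)%N.
  move: lt_card; rewrite (cardD1 i) inE Pi add1n ltnS; apply: leq_trans.
  by rewrite ltnS; apply/eq_leq/eq_card => j; rewrite !inE andbC.
pose c := inner z (e i) / inner y (e i); pose z' := z - c *: y.
have Sz' : S z' := subspaceB S_sub Sz (subspaceZ S_sub c Sy).
have [x' [Sx' fix_x' approx']] := IH P' z' lt_card' Sz'.
exists (x' + c *: y); split.
- by apply: subspaceD => //; exact: subspaceZ.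
- rewrite linearD linearZ /= fix_y -{1}fix_x' dproj_comp.
  rewrite (@eq_dproj n _ P') ?fix_x' // => j lt_jn.
  by rewrite lt_jn /P' /= andbA andbb.
(* z' has no e_i-component, so P' projects it as P does *)
have z'_res : z' - dproj n P' z' = z - dproj n P z.
  have z'i0 : inner z' (e i) = 0 by rewrite innerBl innerZl divfK ?subrr.
  have Pz' : dproj n P z' = dproj n P z - c *: y by rewrite /z' linearB linearZ /= fix_y.
  have := dproj_split z' Pi; rewrite z'i0 scale0r add0r Pz' => <-.
  by rewrite /z' opprB addrA subrK.
have -> : z - (x' + c *: y) = z' - x' by rewrite /z' opprD addrA addrAC.
by rewrite -z'_res.
Qed.

Lemma sqnorm_dproj_support_le Q xi n :
  PD inner e Q -> ominus_cap inner S (range Q) xi ->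
  sqnorm (dproj n (proj_support Q) xi) <= c0 ^+ 2 * sqnorm xi.
Proof.
move=> PD_Q [Sxi xi_perp].
have [x [Sx fix_x approx]] := dproj_cap_approx n (proj_support Q) xi Sxi.
have Rx : range Q x.
  exists x => //; apply: PD_fixed => // k not_supp.
  by rewrite -fix_x inner_dproj_basis (negbTE not_supp) andbF.
have xi_le : sqnorm xi <= sqnorm (xi - x).
  by rewrite sqnormD_orth ?sqnormN ?lerDl ?sqnorm_ge0 // innerNr xi_perp ?oppr0.
have := ler_wpM2l one_sub_c0_sqr_ge0 xi_le.
by have := sqnorm_dproj_split n (proj_support Q) xi; lra.
Qed.

Lemma sqnorm_PD_le {Q : V -> V} {xi : V} :
  PD inner e Q -> ominus_cap inner S (range Q) xi ->
  sqnorm (Q xi) <= c0 ^+ 2 * sqnorm xi.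
Proof.
move=> PD_Q xiSQ; apply: sqnorm_le_dproj => n.
rewrite (_ : dproj n xpredT (Q xi) = dproj n (proj_support Q) xi).
  exact: sqnorm_dproj_support_le.
rewrite /dproj [RHS]big_mkcond; apply: eq_bigr => i _.
by rewrite inner_PD_basis //; case: ifP; rewrite ?scale0r.
Qed.

Lemma cos_PD_le Q : PD inner e Q -> friedrichs_cos inner S (range Q) <= c0.
Proof.
move=> PD_Q; have [_ [QK Q_sa]] := PD_Q.
apply: ge_sup_nonneg (sup_cos_ge0 _ _) => _ [xi [eta [xiSQ xi1 [[w _ <-] _] eta1 ->]]].
rewrite -QK -Q_sa; apply: le_trans (cauchy_schwarz _ _) _; rewrite eta1 mulr1.
rewrite -(@ler_pXn2r _ 2) ?nnegrE ?hnorm_ge0 ?sup_cos_ge0 // hnorm_sqr.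
by have := sqnorm_PD_le PD_Q xiSQ; rewrite -[sqnorm xi]hnorm_sqr xi1 expr1n mulr1.
Qed.

Lemma sup_cos_eq :
  sup_cos inner S (PD inner e) = c0 /\ sup_cos inner S (P0D inner e) = c0.
Proof.
have le_P0SD_P0D : c0 <= sup_cos inner S (P0D inner e).
  apply: le_sup_cos => [T []|] //; exists (dproj 0 xpred0); exact: dproj0_P0SD.
have le_P0D_PD : sup_cos inner S (P0D inner e) <= sup_cos inner S (PD inner e).
  apply: le_sup_cos => [T []|] //; exists (dproj 0 xpred0); exact: dproj_P0D.
have le_PD : sup_cos inner S (PD inner e) <= c0.
  by apply: ge_sup_nonneg (sup_cos_ge0 _ _) => _ [Q PD_Q <-]; exact: cos_PD_le.
by split; lra.
Qed.

End SubspaceAngles.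

End OrthonormalBasis.

End Hilbert.

Theorem proposition4p15 (R : realType) (V : lmodType R[i]) (inner : V -> V -> R[i])
  (Hinner : is_inner_product inner) (Hcomplete : is_complete inner)
  (e : nat -> V) (He : is_orthonormal_basis inner e)
  (S : set V) (HS : closed_subspace inner S) :
  (sup_cos inner S (PD inner e) < 1 <-> sup_cos inner S (P0D inner e) < 1) /\
  (sup_cos inner S (P0D inner e) < 1 <-> sup_cos inner S (P0SD inner e S) < 1).
Proof.
by have [-> ->] := @sup_cos_eq R V inner Hinner e He Hcomplete S (proj1 HS).
Qed.
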